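(* For every integer $s\ge 1$, as $k\to\infty$, $$La([k]^2,\vee_s)=\Big(k_s+\frac{c_s}{k_s+1}+o(1)\Big)k.$$
   Context: $[k]^2$ is ordered coordinatewise. $\vee_s$ is the poset on $s+1$ elements $a,b_1,\dots,b_s$ whose only relations are $a<b_i$ for $i=1,\dots,s$. For posets $P,R$, $P$ is a weak subposet of $R$ if there is an injection $i:P\to R$ with $p\le_P p'\Rightarrow i(p)\le_R i(p')$; a subset $F\subseteq Q$ is weak $P$-free if $P$ is not a weak subposet of $F$ (with the induced order), and $La(Q,P)$ is the maximum size of a weak $P$-free subset of $Q$. For $s\ge1$, $k_s$ is the largest integer $k\ge1$ with $\sum_{j=2}^{k} j<s$ (empty sum $=0$), and $c_s=s-1-\sum_{j=2}^{k_s} j$. *)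

From mathcomp Require Import all_boot all_order all_algebra.
Set Implicit Arguments. Unset Strict Implicit. Unset Printing Implicit Defensive.

(* [k]^2 with the coordinatewise order; [k] = {0,...,k-1} ('I_k), which is
   order-isomorphic to {1,...,k}. *)
Definition grid_le (k : nat) : rel ('I_k * 'I_k) :=
  fun x y => (x.1 <= y.1)%N && (x.2 <= y.2)%N.

(* The poset V_s on s+1 elements: None = a, Some i = b_i; only relations
   a < b_i (plus reflexivity). *)
Definition vee_le (s : nat) : rel (option 'I_s) :=
  fun x y => (x == y) || (x == None).

Definition weak_subposet (P Q : finType) (leP : rel P) (leQ : rel Q)
    (F : {set Q}) : bool :=
  [exists f : {ffun P -> Q},
     [&& injectiveb f,
         [forall p, f p \in F] &
         [forall p, forall p', leP p p' ==> leQ (f p) (f p')]]].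

Definition weak_free (P Q : finType) (leP : rel P) (leQ : rel Q)
    (F : {set Q}) : bool := ~~ weak_subposet leP leQ F.

Definition La (P Q : finType) (leQ : rel Q) (leP : rel P) : nat :=
  \max_(F : {set Q} | weak_free leP leQ F) #|F|.

Definition tri (k : nat) : nat := \sum_(2 <= j < k.+1) j.

(* k_s: the largest k >= 1 with tri k < s.  For s >= 1 every such k
   satisfies k <= s, so the maximum over k < s.+1 is the maximum over all k. *)
Definition k_s (s : nat) : nat :=
  \max_(k < s.+1 | (0 < k)%N && (tri k < s)%N) (k : nat).

Definition c_s (s : nat) : nat := s - 1 - tri (k_s s).

(* A set F of grid points contains a weak copy of V_s iff some
   z in F lies below at least s other points of F, so F is weak V_s-free iff
   every up-set  {y in F | z <= y},  z in F,  has at most s points.  Write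
   s = C(m+1,2) + c with 0 <= c <= m; here m = k_s and c = c_s.

   Upper bound: count the pairs (x, y) of points of F in a common row with x
   weakly left of y.  The pairs with x in column a all end in the up-set of
   the lowest point of F in column a, so there are at most k s of them; on
   the other hand there are sum_b r_b (r_b + 1) / 2 of them, r_b being the
   row sizes.  As r (r + 1) >= 2 (m + 1) r - m (m + 1), this gives
   2 (m + 1) |F| <= k (2 s + m (m + 1)), i.e. |F| <= (m + c / (m + 1)) k.

   Lower bound: take the m antidiagonals just below x + y = k, together with
   the points of x + y = k whose first coordinate lies in c fixed residue
   classes mod m + 1.  An up-set meets the band in a triangle of at most
   C(m+1,2) points and the line x + y = k in at most m + 1 consecutive
   points, of which at most c are taken.  This set has
   (m + c / (m + 1)) k - O(1) points. *)

From mathcomp Require Import all_boot all_order all_algebra.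
From mathcomp Require Import zify ring lra.
Set Implicit Arguments. Unset Strict Implicit. Unset Printing Implicit Defensive.

Lemma leq_card_nat_in (T : finType) (A : {pred T}) (f : T -> nat) n :
  {in A &, injective f} -> {in A, forall x, f x < n} -> #|A| <= n.
Proof.
move=> f_inj f_lt; rewrite cardE -(size_map f) -(size_iota 0 n).
apply: uniq_leq_size.
  by rewrite map_inj_in_uniq ?enum_uniq // => x y; rewrite !mem_enum; apply: f_inj.
by move=> y /mapP[x]; rewrite mem_enum => /f_lt x_lt ->; rewrite mem_iota.
Qed.

Lemma leq_card_inj (T T' : finType) (f : T -> T') (B : {set T'}) :
  injective f -> (forall x, f x \in B) -> #|T| <= #|B|.
Proof.
move=> f_inj fB; rewrite -cardsT -(card_imset _ f_inj).
by apply/subset_leq_card/subsetP => _ /imsetP[x _ ->].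
Qed.

Lemma card_fibers (T J : finType) (A : {set T}) (h : T -> J) :
  #|A| = \sum_(j : J) #|[set x in A | h x == j]|.
Proof.
rewrite -sum1_card (partition_big h xpredT) //=; apply: eq_bigr => j _.
by rewrite -sum1_card; apply: eq_bigl => x; rewrite inE.
Qed.

Lemma card_ordered_pairs (T : finType) (A : {set T}) (f : T -> nat) :
  {in A &, injective f} ->
  #|[set p in setX A A | f p.1 <= f p.2]|.*2 = #|A| * #|A|.+1.
Proof.
move=> f_inj; set S := [set p in _ | _].
set S' := [set p in setX A A | f p.2 <= f p.1].
have card_S' : #|S'| = #|S|.
  have -> : S' = (fun p : T * T => (p.2, p.1)) @^-1: S.
    by apply/setP => -[x y]; rewrite !inE /= (andbC (x \in A)).
  by apply: card_preimset => -[x y] [x' y'] [-> ->].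
have cup : S :|: S' = setX A A.
  by apply/setP => p; rewrite !inE -andb_orr leq_total andbT.
have cap : S :&: S' = [set (x, x) | x in A].
  apply/setP => -[x y]; rewrite !inE /=; apply/idP/imsetP => [|[z zA [-> ->]]].
    case/andP=> /andP[/andP[xA yA] le_xy] /andP[_ le_yx].
    suff -> : y = x by exists x.
    by apply: f_inj => //; apply/eqP; rewrite eqn_leq le_yx le_xy.
  by rewrite zA leqnn.
have := cardsUI S S'; rewrite cup cap cardsX card_S' card_imset; last by move=> x y [].
by rewrite addnn => <-; rewrite mulnS addnC.
Qed.

Lemma eq_of_modn_eq a b n : a < b + n -> b < a + n -> a = b %[mod n] -> a = b.
Proof.
wlog le_ab : a b / a <= b => [wlog lt_a lt_b E | _ lt_b].
  have [le_ab|/ltnW le_ba] := leqP a b; first exact: wlog.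
  exact/esym/(wlog b a le_ba lt_b lt_a (esym E)).
move=> /eqP; rewrite eq_sym eqn_mod_dvd // => /dvdn_leq n_le.
by case: (posnP (b - a)) => [|/n_le]; lia.
Qed.

(* Equivalent to [(r - m) (r - m - 1) >= 0]. *)
Lemma double_mulS_le r m : (m.+1 * r).*2 <= r * r.+1 + m * m.+1.
Proof.
have [le_rm|lt_mr] := leqP r m.
  have [t ->] : exists t, m = r + t by exists (m - r); lia.
  nia.
have [t ->] : exists t, r = m.+1 + t by exists (r - m.+1); lia.
nia.
Qed.

Section VeeFree.
Variables (Q : finType) (leQ : rel Q).

Definition up (F : {set Q}) (z : Q) : {set Q} := [set y in F | leQ z y].

Hypothesis leQ_refl : reflexive leQ.

Lemma vee_freeP s (F : {set Q}) :
  reflect (forall z, z \in F -> #|up F z| <= s) (weak_free (@vee_le s) leQ F).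
Proof.
apply: (iffP negP) => [embed z zF | small].
  rewrite leqNgt; apply/negP => big; apply: embed.
  have /card_geqP[t [t_uniq t_size t_sub]] : s <= #|up F z :\ z|.
    by move: big; rewrite (cardsD1 z) !inE zF leQ_refl.
  have tP (i : 'I_s) : nth z t i \in up F z :\ z.
    by apply: t_sub; rewrite mem_nth // t_size.
  pose g (p : option 'I_s) := if p is Some i then nth z t i else z.
  apply/existsP; exists (finfun g); apply/and3P; split.
  - apply/injectiveP => p q; rewrite !ffunE.
    case: p q => [i|] [j|] //= => [|e|e]; last by have := tP j; rewrite -e !inE eqxx.
      by move/eqP; rewrite nth_uniq ?t_size // => /eqP/val_inj ->.
    by have := tP i; rewrite e !inE eqxx.
  - apply/forallP => -[i|]; rewrite ffunE //=.
    by have := tP i; rewrite !inE => /and3P[].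
  - apply/forallP => p; apply/forallP => q; apply/implyP.
    case/orP => [/eqP -> | /eqP ->]; first exact: leQ_refl.
    rewrite !ffunE; case: q => [j|] /=; last exact: leQ_refl.
    by have := tP j; rewrite !inE => /and3P[].
case/existsP=> f /and3P[/injectiveP f_inj /forallP fF /forallP f_mono].
have sub : f @: [set: option 'I_s] \subset up F (f None).
  apply/subsetP => _ /imsetP[p _ ->]; rewrite inE fF.
  by have /forallP/(_ p) := f_mono None; rewrite /vee_le eqxx orbT.
have := leq_trans (subset_leq_card sub) (small _ (fF None)).
by rewrite card_imset // cardsT card_option card_ord ltnn.
Qed.

End VeeFree.

Lemma grid_le_refl k : reflexive (@grid_le k).
Proof. by move=> x; rewrite /grid_le !leqnn. Qed.

Lemma bin2S_double n : 'C(n.+1, 2).*2 = n * n.+1.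
Proof. by elim: n => // n IH; rewrite binS bin1 doubleD IH; lia. Qed.

Lemma bin2_code_lt d e m : e <= d -> d < m -> 'C(d.+1, 2) + e < 'C(m.+1, 2).
Proof.
move=> le_ed lt_dm; apply: leq_trans (leq_bin2l 2 (lt_dm : d.+2 <= m.+1)).
by rewrite (binS d.+1) bin1 ltn_add2l ltnS.
Qed.

Lemma bin2_code_inj d e d' e' : e <= d -> e' <= d' ->
  'C(d.+1, 2) + e = 'C(d'.+1, 2) + e' -> d = d' /\ e = e'.
Proof.
move=> le_ed le_ed' E; have [lt_dd'|lt_d'd|eq_dd'] := ltngtP d d'.
- by have := bin2_code_lt le_ed lt_dd'; rewrite E ltnNge leq_addr.
- by have := bin2_code_lt le_ed' lt_d'd; rewrite -E ltnNge leq_addr.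
- by move: E; rewrite eq_dd' => /addnI.
Qed.

Lemma tri_bin2 m : 0 < m -> (tri m).+1 = 'C(m.+1, 2).
Proof. by move=> m_gt0; rewrite -bin2_sum [RHS]big_ltn // [RHS]big_ltn. Qed.

Lemma k_s_spec s : 0 < s ->
  [/\ 0 < k_s s, 'C((k_s s).+1, 2) <= s & s < 'C((k_s s).+2, 2)].
Proof.
move=> s_gt0; pose one := Ordinal (s_gt0 : 1 < s.+1).
have P_one : (0 < one) && (tri one < s) by rewrite /tri big_geq.
rewrite /k_s (bigmax_eq_arg one) //; case: arg_maxnP => //= k /andP[k_gt0 tri_lt] k_max.
rewrite -tri_bin2 //; split=> //; rewrite ltnNge; apply/negP => le_s.
have lt_ks : k.+1 < s.+1 by rewrite ltnS (leq_trans _ le_s) // binS bin1 leq_addl.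
by have := k_max (Ordinal lt_ks); rewrite /= tri_bin2 // le_s ltnn => /(_ isT).
Qed.

Lemma k_s_c_s_decomp s : 0 < s ->
  [/\ 0 < k_s s, c_s s <= k_s s & s = 'C((k_s s).+1, 2) + c_s s].
Proof.
move=> /k_s_spec[m_gt0 lo]; rewrite binS bin1 /c_s -subnDA add1n tri_bin2 //.
by split=> //; lia.
Qed.

Section UpperBound.
Variables (k s : nat) (F : {set 'I_k * 'I_k}).

Definition row (b : 'I_k) := [set x in F | x.2 == b].

Definition row_pairs := [set p : ('I_k * 'I_k) * ('I_k * 'I_k) |
  [&& p.1 \in F, p.2 \in F, p.1.2 == p.2.2 & p.1.1 <= p.2.1]].

Lemma card_row_pairs_double :
  #|row_pairs|.*2 = \sum_(b : 'I_k) #|row b| * #|row b|.+1.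
Proof.
rewrite (card_fibers row_pairs (fun p => p.1.2)) -mul2n big_distrr /=.
apply: eq_bigr => b _.
rewrite mul2n -(@card_ordered_pairs _ _ (fun x : 'I_k * 'I_k => val x.1)); last first.
  move=> x y; rewrite !inE => /andP[_ /eqP x2] /andP[_ /eqP y2] /val_inj x1.
  by apply: injective_projections; rewrite // x2 y2.
congr (_.*2); apply: eq_card => -[x y]; rewrite !inE /=.
case: (x.2 =P b) => [->|_]; last by rewrite !andbF.
by rewrite (eq_sym b) !andbT; case: (x \in F); case: (y \in F); case: (_ == _).
Qed.

Hypothesis F_up : forall z, z \in F -> #|up (@grid_le k) F z| <= s.

Lemma card_row_pairs_col a : #|[set p in row_pairs | p.1.1 == a]| <= s.
Proof.
set S := [set p in _ | _]; have [->|/card_gt0P[p0 p0S]] := posnP #|S|; first by [].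
have memS p : p \in S ->
    [/\ p.1 \in F, p.2 \in F, p.1.2 = p.2.2, p.1.1 <= p.2.1 & p.1.1 = a].
  by rewrite !inE => /andP[/and4P[-> -> /eqP-> ->] /eqP->].
have [q qS q_min] : exists2 q, q \in S &
    {in S, forall p : ('I_k * 'I_k) * ('I_k * 'I_k), q.1.2 <= p.1.2}.
  by case: (arg_minnP (fun p => val p.1.2) p0S) => q; exists q.
have [qF _ _ _ qa] := memS q qS.
rewrite -(card_in_imset (f := snd)); last first.
  move=> p p' /memS[_ _ p12 _ pa] /memS[_ _ p12' _ pa'] e.
  apply: injective_projections => //; apply: injective_projections; first by rewrite pa pa'.
  by rewrite p12 p12' e.
apply: leq_trans (F_up qF); apply: subset_leq_card; apply/subsetP => _ /imsetP[p pS ->].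
have [_ p2F p12 le_p pa] := memS p pS.
by rewrite !inE p2F /grid_le qa -pa le_p -p12 q_min.
Qed.

Lemma card_row_pairs_le : #|row_pairs| <= k * s.
Proof.
rewrite (card_fibers row_pairs (fun p => p.1.1)).
apply: (@leq_trans (\sum_(a : 'I_k) s)); last by rewrite sum_nat_const card_ord.
by apply: leq_sum => a _; apply: card_row_pairs_col.
Qed.

Lemma card_grid_bounded_up_le m : (m.+1 * #|F|).*2 <= k * (s.*2 + m * m.+1).
Proof.
rewrite (card_fibers F snd) big_distrr -mul2n big_distrr /=.
apply: (@leq_trans (\sum_(b : 'I_k) (#|row b| * #|row b|.+1 + m * m.+1))).
  by apply: leq_sum => b _; rewrite mul2n double_mulS_le.
rewrite big_split /= -card_row_pairs_double sum_nat_const card_ord.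
have := card_row_pairs_le; nia.
Qed.

End UpperBound.

Section Construction.
Variables (k m c : nat).

Definition band : {set 'I_k * 'I_k} := [set x : 'I_k * 'I_k | k - m <= x.1 + x.2 < k].

(* On the line [x.1 + x.2 = k] the first coordinate is positive, hence the
   shift: every [m + 1] consecutive first coordinates contain [c] points. *)
Definition rim : {set 'I_k * 'I_k} :=
  [set x : 'I_k * 'I_k | (x.1 + x.2 == k) && (x.1.-1 %% m.+1 < c)].

Lemma card_up_band z : z \in band -> #|up (@grid_le k) band z| <= 'C(m.+1, 2).
Proof.
case: z => a b; rewrite inE /= => /andP[lo_ab hi_ab].
have memU (y : 'I_k * 'I_k) : y \in up (@grid_le k) band (a, b) ->
    [/\ a <= y.1, b <= y.2 & y.1 + y.2 < k].
  by rewrite !inE /grid_le => /andP[/andP[_ ->] /andP[-> ->]].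
pose code (y : 'I_k * 'I_k) := 'C((y.1 + y.2 - (a + b)).+1, 2) + (y.1 - a).
apply: (@leq_card_nat_in _ _ code); last first.
  by move=> [y1 y2] /memU/= [? ? ?]; rewrite /code /=; apply: bin2_code_lt; lia.
move=> [y1 y2] [y1' y2'] /memU/= [? ? ?] /memU/= [? ? ?] E.
rewrite /code /= in E; have [||? ?] := bin2_code_inj _ _ E; try lia.
by congr pair; apply: ord_inj; lia.
Qed.

(* The rim points above [z] have at most [m + 1] consecutive first coordinates,
   and there the residue mod [m + 1] determines the point. *)
Lemma card_up_rim z : z \in band -> #|up (@grid_le k) rim z| <= c.
Proof.
case: z => a b; rewrite inE /= => /andP[lo_ab hi_ab].
have memU (y : 'I_k * 'I_k) : y \in up (@grid_le k) rim (a, b) ->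
    [/\ a <= y.1, b <= y.2, y.1 + y.2 = k & y.1.-1 %% m.+1 < c].
  by rewrite !inE /grid_le => /andP[/andP[/eqP-> ->] /andP[-> ->]].
apply: (@leq_card_nat_in _ _ (fun y : 'I_k * 'I_k => y.1.-1 %% m.+1)); last first.
  by move=> y /memU[].
move=> [y1 y2] [y1' y2'] /memU/= [? ? ? ?] /memU/= [? ? ? ?] /= E.
have : y1.-1 = y1'.-1 by apply: eq_of_modn_eq E; lia.
have := ltn_ord y2; have := ltn_ord y2'.
by move=> ? ? ?; congr pair; apply: ord_inj; lia.
Qed.

Lemma card_up_band_rim z : 0 < m -> z \in band :|: rim ->
  #|up (@grid_le k) (band :|: rim) z| <= 'C(m.+1, 2) + c.
Proof.
move=> m_gt0; have -> : up (@grid_le k) (band :|: rim) z =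
    up (@grid_le k) band z :|: up (@grid_le k) rim z.
  by apply/setP => y; rewrite !inE andb_orl.
case/setUP => [z_band | z_rim].
  apply: leq_trans (leq_card_setU _ _) _.
  by rewrite leq_add ?card_up_band ?card_up_rim.
apply: (@leq_trans 1); last first.
  exact: leq_trans (leq_bin2l 2 (m_gt0 : 2 <= m.+1)) (leq_addr _ _).
rewrite -(cards1 z); apply/subset_leq_card/subsetP.
move: z_rim; case: z => a b; rewrite inE /= => /andP[/eqP ab _] [y1 y2].
rewrite !inE /grid_le /=.
case/orP => [/and3P[/andP[_ ?] ? ?] | /and3P[/andP[/eqP ? _] ? ?]]; first lia.
by apply/eqP; congr pair; apply: ord_inj; lia.
Qed.

Lemma card_band_ge : (k - m) * m <= #|band|.
Proof.
have lt_x (x : 'I_(k - m)) : x < k by apply: leq_trans (ltn_ord x) (leq_subr m k).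
have lt_y (x : 'I_(k - m)) (j : 'I_m) : k.-1 - x - j < k by have := lt_x x; lia.
pose g (p : 'I_(k - m) * 'I_m) := (Ordinal (lt_x p.1), Ordinal (lt_y p.1 p.2)).
apply: leq_trans (@leq_card_inj _ _ g _ _ _); first by rewrite card_prod !card_ord.
  move=> [x j] [x' j'] [] ex ey.
  have := ltn_ord x; have := ltn_ord j; have := ltn_ord j'.
  by move=> *; congr pair; apply: ord_inj; lia.
move=> [x j]; rewrite inE /=.
by have := ltn_ord x; have := ltn_ord j; lia.
Qed.

Lemma card_rim_ge : c <= m -> (k %/ m.+1) * c <= #|rim|.
Proof.
move=> c_le_m.
have lt_x (q : 'I_(k %/ m.+1)) (r : 'I_c) : (q * m.+1 + r).+1 < k.
  have := ltn_ord q; rewrite leq_divRL // mulSn; have := ltn_ord r; lia.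
have lt_y (q : 'I_(k %/ m.+1)) (r : 'I_c) : k - (q * m.+1 + r).+1 < k.
  by have := lt_x q r; lia.
pose g (p : 'I_(k %/ m.+1) * 'I_c) := (Ordinal (lt_x p.1 p.2), Ordinal (lt_y p.1 p.2)).
have lt_r (r : 'I_c) : r < m.+1 by have := ltn_ord r; lia.
apply: leq_trans (@leq_card_inj _ _ g _ _ _); first by rewrite card_prod !card_ord.
  move=> [q r] [q' r'] [] e _.
  have er : r = r' :> nat.
    by have := congr1 (modn^~ m.+1) e; rewrite /= !modnMDl !modn_small.
  have := congr1 (divn^~ m.+1) e.
  rewrite /= !divnMDl // (divn_small (lt_r r)) (divn_small (lt_r r')) !addn0.
  by move=> eq; congr pair; apply: ord_inj.
move=> [q r]; rewrite inE /= modnMDl modn_small // ltn_ord andbT.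
by apply/eqP; have := lt_x q r; lia.
Qed.

Lemma card_band_rim_ge : c <= m -> (k - m) * m + (k %/ m.+1) * c <= #|band :|: rim|.
Proof.
move=> c_le_m.
have disj : [disjoint band & rim].
  rewrite -setI_eq0; apply/eqP/setP => x; rewrite !inE.
  by apply/negP => /andP[/andP[_ ?] /andP[/eqP ? _]]; lia.
have /eqP -> : #|band :|: rim| == #|band| + #|rim| by rewrite (leq_card_setU band rim).2.
by rewrite leq_add ?card_band_ge ?card_rim_ge.
Qed.

End Construction.

Lemma La_vee_grid_double_le k s m :
  (m.+1 * La (@grid_le k) (@vee_le s)).*2 <= k * (s.*2 + m * m.+1).
Proof.
have free0 : weak_free (@vee_le s) (@grid_le k) set0.
  by apply/(vee_freeP (@grid_le_refl k)) => z; rewrite inE.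
rewrite /La (bigmax_eq_arg set0) //; case: arg_maxnP => // F F_free _.
exact/card_grid_bounded_up_le/(vee_freeP (@grid_le_refl k)).
Qed.

Lemma card_band_rim_le_La k s m c : 0 < m -> s = 'C(m.+1, 2) + c ->
  #|band k m :|: rim k m c| <= La (@grid_le k) (@vee_le s).
Proof.
move=> m_gt0 ->; apply: (leq_bigmax_cond (band k m :|: rim k m c)).
by apply/(vee_freeP (@grid_le_refl k)) => z; apply: card_up_band_rim.
Qed.

Lemma La_vee_grid_le k s m c : s = 'C(m.+1, 2) + c ->
  m.+1 * La (@grid_le k) (@vee_le s) <= k * (m * m.+1 + c).
Proof.
move=> s_eq; rewrite -leq_double; apply: leq_trans (La_vee_grid_double_le k s m) _.
by rewrite s_eq doubleD bin2S_double -!mul2n; lia.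
Qed.

Lemma La_vee_grid_ge k s m c : 0 < m -> c <= m -> s = 'C(m.+1, 2) + c ->
  k * (m * m.+1 + c) <= m.+1 * La (@grid_le k) (@vee_le s) + m.+1 ^ 3.
Proof.
move=> m_gt0 c_le_m s_eq.
have := leq_trans (card_band_rim_ge k c_le_m) (card_band_rim_le_La k m_gt0 s_eq).
set L := La _ _ => L_ge.
have := divn_eq k m.+1; have := ltn_pmod k (ltn0Sn m).
set q := k %/ m.+1; set r := k %% m.+1 => r_lt k_eq.
have h1 : m.+1 * ((k - m) * m + q * c) <= m.+1 * L by rewrite leq_mul2l L_ge orbT.
have h2 : k * m <= (k - m) * m + m * m by rewrite -mulnDl; apply: leq_mul; lia.
have h3 : r * c <= m * m by apply: leq_mul; lia.
nia.
Qed.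

Import Order.TTheory GRing.Theory Num.Theory.
Local Open Scope ring_scope.

Lemma ratio_cvg_of_sandwich (R : archiFieldType) (a : nat -> nat) (n d C : nat) :
  (0 < d)%N -> (forall k, d * a k <= k * n <= d * a k + C)%N ->
  forall eps : R, 0 < eps -> exists N : nat, forall k : nat, (N <= k)%N ->
    `|(a k)%:R / k%:R - n%:R / d%:R| < eps.
Proof.
move=> d_gt0 bounds eps eps_gt0.
have C_ge0 : 0 <= C%:R / eps by rewrite divr_ge0 // ltW.
exists (Num.bound (C%:R / eps)) => k k_ge.
have C_lt : C%:R / eps < k%:R by apply: lt_le_trans (archi_boundP C_ge0) _; rewrite ler_nat.
have k_gt0 : 0 < k%:R :> R by apply: le_lt_trans C_lt.
have d_ge1 : 1 <= d%:R :> R by rewrite ler1n.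
have /andP[lo hi] := bounds k.
have loR : d%:R * (a k)%:R <= k%:R * n%:R :> R by rewrite -!natrM ler_nat.
have hiR : k%:R * n%:R <= d%:R * (a k)%:R + C%:R :> R by rewrite -!natrM -natrD ler_nat.
have -> : (a k)%:R / k%:R - n%:R / d%:R =
    (d%:R * (a k)%:R - k%:R * n%:R) / (k%:R * d%:R) :> R.
  by field; rewrite ?lt0r_neq0 // (lt_le_trans ltr01 d_ge1).
have kd_gt0 : 0 < k%:R * d%:R :> R by rewrite mulr_gt0 // (lt_le_trans ltr01 d_ge1).
rewrite normrM normfV (gtr0_norm kd_gt0) ltr_pdivrMr // ler0_norm ?subr_le0 //.
move: C_lt; rewrite ltr_pdivrMr // => C_lt.
have : eps * k%:R <= eps * (k%:R * d%:R) by rewrite ler_pM2l // ler_peMr // ltW.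
lra.
Qed.

Theorem theorem1p5 (s : nat) : (1 <= s)%N ->
  forall eps : rat, 0 < eps ->
  exists N : nat, forall k : nat, (N <= k)%N ->
    `| (La (@grid_le k) (@vee_le s))%:R / k%:R
       - ((k_s s)%:R + (c_s s)%:R / (k_s s).+1%:R) | < eps.
Proof.
move=> /k_s_c_s_decomp[m_gt0 c_le_m s_eq].
set m := k_s s in m_gt0 c_le_m s_eq *; set c := c_s s in c_le_m s_eq *.
have -> : m%:R + c%:R / m.+1%:R = (m * m.+1 + c)%:R / m.+1%:R :> rat.
  by rewrite natrD natrM mulrDl mulfK // pnatr_eq0.
apply: (ratio_cvg_of_sandwich (a := fun k => La (@grid_le k) (@vee_le s)) (C := m.+1 ^ 3)) => // k.
by rewrite La_vee_grid_le // La_vee_grid_ge.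
Qed.
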